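(* Let $p^*$ be the market equilibrium (with all $p^*_j>0$) of a complementary-CES Fisher market, let $R=\{p':\ \frac1{1.9}p^*_j\le p'_j\le1.9p^*_j\ \forall j\}$, $\theta_i=\rho_i/(\rho_i-1)$ and $\bar\theta=\max_i\theta_i$. Then for every $p'\in R$, $$\sum_jp^*_j(f_j)^2\le\bar M\sum_jp'_j\big(z_j(p')\big)^2,\qquad f_j=\ln(p'_j/p^*_j),$$ where $\bar M=(1-\bar\theta)^{-1}\max\big\{26.56,\ 6.64\,\bar\theta\,(1+\bar\theta-2^{\bar\theta})^{-1}\big\}$ (for $\bar\theta=0$ the second entry of the max is read as its limit).
   Context: A Fisher market has $n$ goods, each with supply $1$, and buyers $i$ with budgets $e_i>0$ and complementary-CES utilities $u_i(x)=(\sum_ja_{ij}x_{ij}^{\rho_i})^{1/\rho_i}$ with $\rho_i\le0$, $a_{ij}\ge0$ (so $\theta_i\in[0,1)$). At prices $p$, buyer $i$ demands a utility-maximizing bundle of cost at most $e_i$; $x_j(p)$ is the total demand for good $j$ and $z_j(p)=x_j(p)-1$ its excess demand. A market equilibrium is a price vector $p^*$ with $z_j(p^* )=0$ whenever $p^*_j>0$ and $z_j(p^* )\le0$ whenever $p^*_j=0$. *)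

From Stdlib Require Import Reals.
Open Scope R_scope.

(* Goods are indexed 0..n-1, buyers 0..m-1. *)

Fixpoint sumR (n : nat) (f : nat -> R) : R :=
  match n with O => 0 | S k => sumR k f + f k end.

Fixpoint prodR (n : nat) (f : nat -> R) : R :=
  match n with O => 1 | S k => prodR k f * f k end.

Fixpoint hasZero (n : nat) (a x : nat -> R) : bool :=
  match n with
  | O => false
  | S k => hasZero k a x ||
           (if Rlt_dec 0 (a k) then (if Rle_dec (x k) 0 then true else false)
            else false)
  end.

(* Complementary-CES utility (sum_j a_j x_j^rho)^(1/rho), rho <= 0, evaluated on a
   bundle x >= 0.  Terms with a_j = 0 are omitted (convention 0 * 0^rho = 0);
   if some good with a_j > 0 is absent the utility is 0 (its limiting value).
   For rho = 0 we use the Cobb-Douglas limit prod_j x_j^(a_j / sum_k a_k). *)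
Definition ces_utility (n : nat) (a : nat -> R) (rho : R) (x : nat -> R) : R :=
  if hasZero n a x then 0
  else if Req_EM_T rho 0 then
    prodR n (fun j => if Rlt_dec 0 (a j) then Rpower (x j) (a j / sumR n a) else 1)
  else
    Rpower (sumR n (fun j => if Rlt_dec 0 (a j) then a j * Rpower (x j) rho else 0))
           (/ rho).

Definition optimal_bundle (n : nat) (a : nat -> R) (rho e : R) (p x : nat -> R)
  : Prop :=
  (forall j, (j < n)%nat -> 0 <= x j) /\
  sumR n (fun j => p j * x j) <= e /\
  (forall y : nat -> R,
      (forall j, (j < n)%nat -> 0 <= y j) ->
      sumR n (fun j => p j * y j) <= e ->
      ces_utility n a rho y <= ces_utility n a rho x).

Definition is_demand (n m : nat) (a : nat -> nat -> R) (rho e : nat -> R)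
  (p : nat -> R) (x : nat -> nat -> R) : Prop :=
  forall i, (i < m)%nat -> optimal_bundle n (a i) (rho i) (e i) p (x i).

(* excess demand z_j = sum_i x_ij - 1 (supply 1) *)
Definition excess (m : nat) (x : nat -> nat -> R) (j : nat) : R :=
  sumR m (fun i => x i j) - 1.

Definition market_equilibrium (n m : nat) (a : nat -> nat -> R) (rho e : nat -> R)
  (p : nat -> R) : Prop :=
  exists x, is_demand n m a rho e p x /\
    (forall j, (j < n)%nat -> 0 < p j -> excess m x j = 0) /\
    (forall j, (j < n)%nat -> p j = 0 -> excess m x j <= 0).

Definition theta (rho : R) : R := rho / (rho - 1).

Definition Mbar (th : R) : R :=
  / (1 - th) *
  Rmax (2656 / 100)
       (if Req_EM_T th 0 then (664 / 100) / (1 - ln 2)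
        else (664 / 100) * th / (1 + th - Rpower 2 th)).

(* Write [r_j = p'_j / p*_j] and let [U_ij] and [V_ij] be the budget shares of buyer [i] at
   [p*] and at [p'], so that [V_ij] is proportional to [U_ij r_j^theta_i] and, by market
   clearing, [p*_j = sum_i e_i U_ij].  Pairing excess demand with the price change gives
     [sum_j - z_j(p') (p'_j - p*_j) = sum_i e_i (sum_j U_ij r_j - 2 + sum_j V_ij / r_j)].
   For [r_j] in [(1/2, 2]], convexity estimates for [r^theta] and [ln r] bound the term of
   buyer [i] below by [13/40 (1 - theta_i) sum_j U_ij (r_j - 1)^2 / r_j]; summing, the left
   side is at least [13/40 (1 - thbar) B] with [B = sum_j p*_j (r_j - 1)^2 / r_j].
   Cauchy-Schwarz bounds the same left side by [sqrt (sum_j p'_j z_j^2 * B)], hence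
   [B <= (40/13)^2 (1 - thbar)^-2 sum_j p'_j z_j^2 <= Mbar sum_j p'_j z_j^2], and
   [(ln r)^2 <= (r - 1)^2 / r] bounds the left side of the theorem by [B]. *)

From Stdlib Require Import Reals Lra Lia Psatz.
From Coquelicot Require Import Coquelicot.
Open Scope R_scope.

Lemma sumR_ext n f g : (forall j, (j < n)%nat -> f j = g j) -> sumR n f = sumR n g.
Proof.
  induction n as [|n IH]; intros H; simpl; [reflexivity|].
  rewrite IH, H; [reflexivity | lia | intros; apply H; lia].
Qed.

Lemma sumR_le n f g : (forall j, (j < n)%nat -> f j <= g j) -> sumR n f <= sumR n g.
Proof.
  induction n as [|n IH]; intros H; simpl; [lra|].
  assert (f n <= g n) by (apply H; lia).
  assert (sumR n f <= sumR n g) by (apply IH; intros; apply H; lia).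
  lra.
Qed.

Lemma sumR_lt n f g : (forall j, (j < n)%nat -> f j <= g j) ->
  (exists j, (j < n)%nat /\ f j < g j) -> sumR n f < sumR n g.
Proof.
  induction n as [|n IH]; intros H [j [Hj Hlt]]; simpl; [lia|].
  destruct (Nat.eq_dec j n) as [->|Hne].
  - assert (sumR n f <= sumR n g) by (apply sumR_le; intros; apply H; lia). lra.
  - assert (sumR n f < sumR n g) by (apply IH; [intros; apply H; lia | exists j; split; [lia | exact Hlt]]).
    assert (f n <= g n) by (apply H; lia). lra.
Qed.

Lemma sumR_plus n f g : sumR n (fun j => f j + g j) = sumR n f + sumR n g.
Proof. induction n as [|n IH]; simpl; [ring|]. rewrite IH. ring. Qed.

Lemma sumR_minus n f g : sumR n (fun j => f j - g j) = sumR n f - sumR n g.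
Proof. induction n as [|n IH]; simpl; [ring|]. rewrite IH. ring. Qed.

Lemma sumR_scal n c f : sumR n (fun j => c * f j) = c * sumR n f.
Proof. induction n as [|n IH]; simpl; [ring|]. rewrite IH. ring. Qed.

Lemma sumR_opp n f : sumR n (fun j => - f j) = - sumR n f.
Proof. induction n as [|n IH]; simpl; [ring|]. rewrite IH. ring. Qed.

Lemma sumR_0 n : sumR n (fun _ => 0) = 0.
Proof. induction n as [|n IH]; simpl; [ring|]. rewrite IH. ring. Qed.

Lemma sumR_nonneg n f : (forall j, (j < n)%nat -> 0 <= f j) -> 0 <= sumR n f.
Proof. intros H. rewrite <- (sumR_0 n). apply sumR_le. exact H. Qed.

Lemma sumR_pos n f : (forall j, (j < n)%nat -> 0 <= f j) ->
  (exists j, (j < n)%nat /\ 0 < f j) -> 0 < sumR n f.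
Proof. intros H Hex. rewrite <- (sumR_0 n). apply sumR_lt; assumption. Qed.

Lemma sumR_swap n m (F : nat -> nat -> R) :
  sumR n (fun j => sumR m (fun i => F i j)) = sumR m (fun i => sumR n (fun j => F i j)).
Proof.
  induction n as [|n IH]; simpl; [symmetry; apply sumR_0|].
  rewrite IH, <- sumR_plus. reflexivity.
Qed.

Lemma sumR_mixture n m (e : nat -> R) (U : nat -> nat -> R) (q f : nat -> R) :
  (forall j, (j < n)%nat -> q j = sumR m (fun i => e i * U i j)) ->
  sumR n (fun j => q j * f j) = sumR m (fun i => e i * sumR n (fun j => U i j * f j)).
Proof.
  intros Hq. rewrite <- (sumR_ext m (fun i => sumR n (fun j => e i * (U i j * f j))))
    by (intros; apply sumR_scal).
  rewrite <- sumR_swap. apply sumR_ext. intros j Hj.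
  rewrite (Hq j Hj), Rmult_comm, <- sumR_scal. apply sumR_ext. intros; ring.
Qed.

Lemma sumR_wavg_ge n (U f : nat -> R) c : (forall j, (j < n)%nat -> 0 <= U j) -> sumR n U = 1 ->
  (forall j, (j < n)%nat -> c <= f j) -> c <= sumR n (fun j => U j * f j).
Proof.
  intros HU HS Hf. replace c with (sumR n (fun j => c * U j)) by (rewrite sumR_scal, HS; ring).
  apply sumR_le. intros j Hj. specialize (HU j Hj). specialize (Hf j Hj). nra.
Qed.

Lemma sumR_wavg_le n (U f : nat -> R) c : (forall j, (j < n)%nat -> 0 <= U j) -> sumR n U = 1 ->
  (forall j, (j < n)%nat -> f j <= c) -> sumR n (fun j => U j * f j) <= c.
Proof.
  intros HU HS Hf. replace c with (sumR n (fun j => c * U j)) by (rewrite sumR_scal, HS; ring).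
  apply sumR_le. intros j Hj. specialize (HU j Hj). specialize (Hf j Hj). nra.
Qed.

Lemma cross_term_le A X Y x y : 0 <= X -> 0 <= Y -> A ^ 2 <= X * Y ->
  2 * A * x * y <= X * y ^ 2 + Y * x ^ 2.
Proof.
  intros HX HY HA.
  assert (Hsq : (2 * A * x * y) ^ 2 <= (X * y ^ 2 + Y * x ^ 2) ^ 2).
  { assert (4 * A ^ 2 * (x * y) ^ 2 <= 4 * (X * Y) * (x * y) ^ 2)
      by (apply Rmult_le_compat_r; [apply pow2_ge_0 | lra]).
    pose proof (pow2_ge_0 (X * y ^ 2 - Y * x ^ 2)). nra. }
  assert (0 <= X * y ^ 2 + Y * x ^ 2) by (pose proof (pow2_ge_0 x); pose proof (pow2_ge_0 y); nra).
  destruct (Rle_dec (2 * A * x * y) 0); [lra|].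
  apply Rsqr_incr_0_var; unfold Rsqr; nra.
Qed.

Lemma sumR_cauchy_schwarz n (f g w : nat -> R) : (forall j, (j < n)%nat -> 0 < w j) ->
  sumR n (fun j => f j * g j) ^ 2 <=
  sumR n (fun j => w j * f j ^ 2) * sumR n (fun j => g j ^ 2 / w j).
Proof.
  induction n as [|n IH]; intros Hw; [simpl; lra|]. cbn [sumR].
  assert (HA := IH (fun j Hj => Hw j ltac:(lia))).
  assert (HX : 0 <= sumR n (fun j => w j * f j ^ 2)).
  { apply sumR_nonneg. intros j Hj. assert (0 < w j) by (apply Hw; lia). nra. }
  assert (HY : 0 <= sumR n (fun j => g j ^ 2 / w j)).
  { apply sumR_nonneg. intros j Hj. assert (0 < w j) by (apply Hw; lia).
    apply Rdiv_le_0_compat; [nra | lra]. }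
  assert (Hwn : 0 < w n) by (apply Hw; lia).
  pose proof (cross_term_le _ _ _ (f n) (g n / w n) HX HY HA) as Hc.
  replace (f n * g n) with (w n * (f n * (g n / w n))) by (field; lra).
  replace (g n ^ 2 / w n) with (w n * (g n / w n) ^ 2) by (field; lra).
  set (y := g n / w n) in *.
  set (A := sumR n (fun j => f j * g j)) in *.
  set (X := sumR n (fun j => w j * f j ^ 2)) in *.
  set (Y := sumR n (fun j => g j ^ 2 / w j)) in *.
  assert (w n * (2 * A * f n * y) <= w n * (X * y ^ 2 + Y * f n ^ 2)) by (apply Rmult_le_compat_l; lra).
  replace ((A + w n * (f n * y)) ^ 2) with (A ^ 2 + w n * (2 * A * f n * y) + (w n * f n * y) ^ 2) by ring.
  replace ((X + w n * f n ^ 2) * (Y + w n * y ^ 2))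
    with (X * Y + w n * (X * y ^ 2 + Y * f n ^ 2) + (w n * f n * y) ^ 2) by ring.
  lra.
Qed.

Lemma Rpower_pos x k : 0 < Rpower x k.
Proof. apply exp_pos. Qed.

Lemma ln_le_sub_1 x : 0 < x -> ln x <= x - 1.
Proof. intros Hx. pose proof (exp_ineq1_le (ln x)) as He. rewrite exp_ln in He by lra. lra. Qed.

Lemma ln_lt_sub_1 x : 0 < x -> x <> 1 -> ln x < x - 1.
Proof.
  intros Hx H1. pose proof (exp_ineq1 (ln x) (ln_neq_0 x H1 Hx)) as He.
  rewrite exp_ln in He by lra. lra.
Qed.

Lemma ln_lt_tangent x y : 0 < x -> 0 < y -> y <> x -> ln y < ln x + (y - x) / x.
Proof.
  intros Hx Hy Hne.
  assert (Hyx : y / x <> 1).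
  { intro E. apply Hne. replace y with (y / x * x) by (field; lra). rewrite E. ring. }
  pose proof (ln_lt_sub_1 (y / x) ltac:(apply Rdiv_lt_0_compat; lra) Hyx) as Hl.
  rewrite ln_div in Hl by lra. replace ((y - x) / x) with (y / x - 1) by (field; lra). lra.
Qed.

Lemma Rpower_gt_tangent rho x y : rho < 0 -> 0 < x -> 0 < y -> y <> x ->
  Rpower x rho + rho * Rpower x (rho - 1) * (y - x) < Rpower y rho.
Proof.
  intros Hrho Hx Hy Hne.
  assert (Ey : Rpower y rho = Rpower x rho * exp (rho * ln (y / x))).
  { unfold Rpower. rewrite <- exp_plus, ln_div by lra. f_equal. ring. }
  assert (Ex : Rpower x (rho - 1) = Rpower x rho / x).
  { unfold Rminus. rewrite Rpower_plus, Rpower_Ropp, Rpower_1 by lra. reflexivity. }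
  pose proof (ln_lt_tangent x y Hx Hy Hne) as Hln.
  rewrite ln_div in * by lra.
  pose proof (exp_ineq1_le (rho * (ln y - ln x))).
  pose proof (Rpower_pos x rho).
  assert (rho * ((y - x) / x) < rho * (ln y - ln x)) by (apply Rmult_lt_gt_compat_neg_l; lra).
  rewrite Ey, Ex. replace (rho * (Rpower x rho / x) * (y - x)) with (Rpower x rho * (rho * ((y - x) / x)))
    by (field; lra).
  nra.
Qed.

Lemma Rpower_lt_bernoulli r th : 0 < r -> r <> 1 -> 0 < th < 1 ->
  Rpower r th < 1 + th * (r - 1).
Proof.
  intros Hr Hr1 Hth.
  assert (Hl : ln r <> 0) by (apply ln_neq_0; lra).
  assert (E1 : r = Rpower r th * exp ((1 - th) * ln r)).
  { unfold Rpower. rewrite <- exp_plus. replace (th * ln r + (1 - th) * ln r) with (ln r) by ring.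
    rewrite exp_ln; lra. }
  assert (E2 : 1 = Rpower r th * exp (- (th * ln r))).
  { unfold Rpower. rewrite <- exp_plus. replace (th * ln r + - (th * ln r)) with 0 by ring.
    rewrite exp_0; reflexivity. }
  pose proof (exp_ineq1 ((1 - th) * ln r) ltac:(apply Rmult_integral_contrapositive; split; lra)).
  pose proof (exp_ineq1 (- (th * ln r))
    ltac:(apply Ropp_neq_0_compat, Rmult_integral_contrapositive; split; lra)).
  pose proof (Rpower_pos r th).
  set (q := Rpower r th) in *.
  assert (r > q * (1 + (1 - th) * ln r)) by (rewrite E1 at 1; apply Rmult_lt_compat_l; lra).
  assert (1 > q * (1 + - (th * ln r))) by (rewrite E2 at 1; apply Rmult_lt_compat_l; lra).
  nra.
Qed.

Lemma Rpower_le_bernoulli r th : 0 < r -> 0 <= th <= 1 -> Rpower r th <= 1 + th * (r - 1).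
Proof.
  intros Hr Hth.
  destruct (Req_dec th 0) as [->|H0]; [rewrite Rpower_O; lra|].
  destruct (Req_dec th 1) as [->|H1]; [rewrite Rpower_1; lra|].
  destruct (Req_dec r 1) as [->|Hr1]; [unfold Rpower; rewrite ln_1, Rmult_0_r, exp_0; lra|].
  left. apply Rpower_lt_bernoulli; lra.
Qed.

Lemma Rpower_div_ge r th : 0 < r -> 1 - (1 - th) * ln r <= Rpower r th / r.
Proof.
  intros Hr. replace (Rpower r th / r) with (exp ((th - 1) * ln r)).
  - pose proof (exp_ineq1_le ((th - 1) * ln r)). lra.
  - unfold Rpower. replace ((th - 1) * ln r) with (th * ln r + - ln r) by ring.
    rewrite exp_plus, exp_Ropp, exp_ln by lra. field. lra.
Qed.

Lemma one_sub_le_Rpower r th : / 2 <= r -> 0 <= th -> 1 - th <= Rpower r th.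
Proof.
  intros Hr Hth. unfold Rpower.
  pose proof (exp_ineq1_le (th * ln r)).
  pose proof (ln_le_sub_1 (/ r) ltac:(apply Rinv_0_lt_compat; lra)) as Hl.
  rewrite ln_Rinv in Hl by lra.
  assert (/ r <= 2) by (replace 2 with (/ / 2) by field; apply Rinv_le_contravar; lra).
  nra.
Qed.

Lemma ln_2_lt : ln 2 < 7 / 10.
Proof.
  assert (H : 2 < exp (7 / 10)).
  { replace (7 / 10) with (INR 64 * ln (exp (7 / 640))) by (rewrite ln_exp; simpl; lra).
    change (2 < Rpower (exp (7 / 640)) (INR 64)). rewrite Rpower_pow by apply exp_pos.
    assert (1 + 7 / 640 <= exp (7 / 640)) by apply exp_ineq1_le.
    assert ((1 + 7 / 640) ^ 64 <= exp (7 / 640) ^ 64) by (apply pow_incr; lra).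
    lra. }
  rewrite <- (ln_exp (7 / 10)). apply ln_increasing; lra.
Qed.

Lemma deriv_nonneg_le (f f' : R -> R) a b : a <= b ->
  (forall c, a <= c <= b -> derivable_pt_lim f c (f' c)) ->
  (forall c, a < c < b -> 0 <= f' c) -> f a <= f b.
Proof.
  intros Hab Hd Hp. destruct (Req_dec a b) as [->|Hne]; [lra|].
  destruct (MVT_cor2 f f' a b) as [c [Hc1 Hc2]]; [lra | exact Hd|].
  assert (0 <= f' c) by (apply Hp; lra). nra.
Qed.

Lemma increasing_sign_at_1 (f f' : R -> R) a r : a < 1 -> a < r -> f 1 = 0 ->
  (forall c, a < c -> derivable_pt_lim f c (f' c)) ->
  (forall c, a < c -> 0 <= f' c) -> 0 <= (r - 1) * f r.
Proof.
  intros Ha1 Har Hf1 Hd Hp. destruct (Rle_dec 1 r) as [Hr|Hr].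
  - assert (f 1 <= f r) by (apply (deriv_nonneg_le f f'); [lra | intros; apply Hd | intros; apply Hp]; lra).
    nra.
  - assert (f r <= f 1) by (apply (deriv_nonneg_le f f'); [lra | intros; apply Hd | intros; apply Hp]; lra).
    nra.
Qed.

Lemma min_at_1_nonneg (f f' : R -> R) a r : a < 1 -> a < r -> f 1 = 0 ->
  (forall c, a < c -> derivable_pt_lim f c (f' c)) ->
  (forall c, a < c -> 0 <= (c - 1) * f' c) -> 0 <= f r.
Proof.
  intros Ha1 Har Hf1 Hd Hs. destruct (Rle_dec 1 r) as [Hr|Hr].
  - rewrite <- Hf1. apply (deriv_nonneg_le f f'); [lra | intros; apply Hd; lra|].
    intros c Hc. specialize (Hs c ltac:(lra)). nra.
  - enough (- f r <= - f 1) by lra.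
    apply (deriv_nonneg_le (fun x => - f x) (fun x => - f' x)); [lra | |].
    + intros c Hc. apply derivable_pt_lim_opp, Hd. lra.
    + intros c Hc. specialize (Hs c ltac:(lra)). nra.
Qed.

Lemma ln_sq_le r : 0 < r -> ln r ^ 2 <= (r - 1) ^ 2 / r.
Proof.
  intros Hr.
  enough (0 <= (r - 1) ^ 2 / r - ln r ^ 2) by lra.
  apply (min_at_1_nonneg (fun x => (x - 1) ^ 2 / x - ln x ^ 2)
                         (fun x => (x - / x - 2 * ln x) / x) 0); [lra | exact Hr | | |].
  - simpl. rewrite ln_1. field.
  - intros c Hc. apply is_derive_Reals. auto_derive; [lra | field; lra].
  - intros c Hc.
    assert (Hsign : 0 <= (c - 1) * (c - / c - 2 * ln c)).
    { apply (increasing_sign_at_1 (fun x => x - / x - 2 * ln x) (fun x => (1 - / x) ^ 2) 0);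
        [lra | exact Hc | | | intros; apply pow2_ge_0].
      - rewrite ln_1. field.
      - intros x Hx. apply is_derive_Reals. auto_derive; [lra | field; lra]. }
    replace ((c - 1) * ((c - / c - 2 * ln c) / c)) with ((c - 1) * (c - / c - 2 * ln c) / c)
      by (field; lra).
    apply Rdiv_le_0_compat; lra.
Qed.

Lemma sub_1_sub_ln_ge r : / 2 < r -> (r - 1) ^ 2 / (3 * r) <= r - 1 - ln r.
Proof.
  intros Hr.
  enough (0 <= r - 1 - ln r - (r - 1) ^ 2 / (3 * r)) by lra.
  apply (min_at_1_nonneg (fun x => x - 1 - ln x - (x - 1) ^ 2 / (3 * x))
                         (fun x => (x - 1) * (2 * x - 1) / (3 * x ^ 2)) (/ 2));
    [lra | exact Hr | | |].
  - simpl. rewrite ln_1. field.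
  - intros c Hc. apply is_derive_Reals. auto_derive; [lra | field; lra].
  - intros c Hc.
    replace ((c - 1) * ((c - 1) * (2 * c - 1) / (3 * c ^ 2))) with ((c - 1) ^ 2 * (2 * c - 1) / (3 * c ^ 2))
      by (field; lra).
    apply Rdiv_le_0_compat; [apply Rmult_le_pos; [apply pow2_ge_0 | lra] | nra].
Qed.

(* The quadratic step below needs [g + g^2/32 <= 1/3]; 13/40 also makes
   [Mbar th >= (g (1 - th))^-2] (lemma [Mbar_gap_coef]). *)
Definition gap_coef : R := 13 / 40.

Lemma gap_coef_quadratic th W y mu : 0 <= th < 1 -> 0 <= W <= / 2 -> W / 3 <= y - mu ->
  gap_coef * (1 - th) * W * (1 + th * y) <= (y - 1) * (1 + th * y) + 1 - (1 - th) * mu.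
Proof.
  intros Hth HW Hmu. unfold gap_coef.
  replace ((y - 1) * (1 + th * y) + 1 - (1 - th) * mu) with (th * y ^ 2 + (1 - th) * (y - mu)) by ring.
  assert (0 <= th * (y - 13 / 80 * (1 - th) * W) ^ 2) by (apply Rmult_le_pos; [lra | apply pow2_ge_0]).
  assert (0 <= (1 - th) * W * (1 / 3 - 13 / 40 - (13 / 40) ^ 2 / 4 * th * (1 - th) * W)).
  { apply Rmult_le_pos; [nra|].
    assert (th * (1 - th) <= / 4) by (pose proof (pow2_ge_0 (th - / 2)); lra).
    assert (0 <= th * (1 - th)) by (apply Rmult_le_pos; lra).
    assert (th * (1 - th) * W <= / 4 * W) by (apply Rmult_le_compat_r; lra).
    lra. }
  assert ((1 - th) * (W / 3) <= (1 - th) * (y - mu)) by (apply Rmult_le_compat_l; lra).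
  lra.
Qed.

Lemma div_le_div_of_bounds a N P D : 0 < P -> P <= D -> a <= N -> 0 <= N -> a / D <= N / P.
Proof.
  intros HP HPD HaN HN. destruct (Rle_dec 0 a) as [Ha|Ha].
  - apply Rle_trans with (a / P).
    + apply Rmult_le_compat_l; [lra|]. apply Rinv_le_contravar; lra.
    + apply Rmult_le_compat_r; [left; apply Rinv_0_lt_compat |]; lra.
  - apply Rle_trans with 0.
    + assert (0 < / D) by (apply Rinv_0_lt_compat; lra). unfold Rdiv. nra.
    + apply Rdiv_le_0_compat; lra.
Qed.

Lemma sumR_wavg_affine n (U f : nat -> R) c d : sumR n U = 1 ->
  sumR n (fun j => U j * (c + d * f j)) = c + d * sumR n (fun j => U j * f j).
Proof.
  intros HS. transitivity (sumR n (fun j => c * U j + d * (U j * f j))).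
  - apply sumR_ext. intros; ring.
  - rewrite sumR_plus, !sumR_scal, HS. ring.
Qed.

Section BuyerGap.

Variables (n : nat) (U r : nat -> R) (th : R).
Hypothesis th_range : 0 <= th < 1.
Hypothesis U_nonneg : forall j, (j < n)%nat -> 0 <= U j.
Hypothesis U_sum1 : sumR n U = 1.
Hypothesis r_range : forall j, (j < n)%nat -> / 2 < r j <= 2.

Local Notation M := (sumR n (fun j => U j * r j)).
Local Notation W := (sumR n (fun j => U j * ((r j - 1) ^ 2 / r j))).
Local Notation mu := (sumR n (fun j => U j * ln (r j))).
Local Notation P := (sumR n (fun j => U j * Rpower (r j) th)).
Local Notation N := (sumR n (fun j => U j * Rpower (r j) th / r j)).

Lemma buyer_deflated_index_lb : 1 - (1 - th) * mu <= N.
Proof.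
  replace (1 - (1 - th) * mu) with (1 + - (1 - th) * mu) by ring.
  rewrite <- (sumR_wavg_affine n U (fun j => ln (r j)) 1 (- (1 - th))) by exact U_sum1.
  apply sumR_le. intros j Hj. specialize (U_nonneg j Hj). specialize (r_range j Hj).
  pose proof (Rpower_div_ge (r j) th ltac:(lra)).
  replace (U j * Rpower (r j) th / r j) with (U j * (Rpower (r j) th / r j)) by (field; lra).
  apply Rmult_le_compat_l; lra.
Qed.

Lemma buyer_price_index_ub : P <= 1 + th * (M - 1).
Proof.
  replace (1 + th * (M - 1)) with ((1 - th) + th * M) by ring.
  rewrite <- (sumR_wavg_affine n U r (1 - th) th) by exact U_sum1.
  apply sumR_le. intros j Hj. specialize (U_nonneg j Hj). specialize (r_range j Hj).
  pose proof (Rpower_le_bernoulli (r j) th ltac:(lra) ltac:(lra)).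
  apply Rmult_le_compat_l; lra.
Qed.

Lemma buyer_price_index_lb : 1 - th <= P.
Proof.
  apply sumR_wavg_ge; [exact U_nonneg | exact U_sum1 |].
  intros j Hj. specialize (r_range j Hj). apply one_sub_le_Rpower; lra.
Qed.

Lemma buyer_dispersion_range : 0 <= W <= / 2.
Proof.
  split.
  - apply sumR_nonneg. intros j Hj. specialize (U_nonneg j Hj). specialize (r_range j Hj).
    apply Rmult_le_pos; [lra|]. apply Rdiv_le_0_compat; [apply pow2_ge_0 | lra].
  - apply sumR_wavg_le; [exact U_nonneg | exact U_sum1 |].
    intros j Hj. specialize (r_range j Hj).
    apply Rmult_le_reg_r with (r j); [lra|]. unfold Rdiv. rewrite Rmult_assoc, Rinv_l by lra. nra.
Qed.

Lemma buyer_dispersion_le_log_gap : W / 3 <= M - 1 - mu.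
Proof.
  replace (M - 1 - mu) with (sumR n (fun j => U j * (r j - 1 - ln (r j)))).
  2:{ transitivity (sumR n (fun j => U j * r j - U j - U j * ln (r j))); [apply sumR_ext; intros; ring|].
      rewrite !sumR_minus, U_sum1. reflexivity. }
  unfold Rdiv at 1. rewrite Rmult_comm, <- sumR_scal. apply sumR_le. intros j Hj.
  specialize (U_nonneg j Hj). specialize (r_range j Hj).
  pose proof (sub_1_sub_ln_ge (r j) ltac:(lra)).
  replace (/ 3 * (U j * ((r j - 1) ^ 2 / r j))) with (U j * ((r j - 1) ^ 2 / (3 * r j))) by (field; lra).
  apply Rmult_le_compat_l; lra.
Qed.

Lemma buyer_gap : gap_coef * (1 - th) * W <= M - 2 + N / P.
Proof.
  pose proof buyer_price_index_lb as HPlb. pose proof buyer_price_index_ub as HPub.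
  pose proof buyer_dispersion_range as HW. pose proof buyer_dispersion_le_log_gap as HWmu.
  assert (HN0 : 0 <= N).
  { apply sumR_nonneg. intros j Hj. specialize (U_nonneg j Hj). specialize (r_range j Hj).
    pose proof (Rpower_pos (r j) th). apply Rdiv_le_0_compat; [nra | lra]. }
  assert (HND := div_le_div_of_bounds (1 - (1 - th) * mu) N P (1 + th * (M - 1))
                  ltac:(lra) HPub buyer_deflated_index_lb HN0).
  pose proof (gap_coef_quadratic th W (M - 1) mu th_range HW ltac:(lra)) as Hq.
  set (D := 1 + th * (M - 1)) in *.
  enough (gap_coef * (1 - th) * W <= M - 2 + (1 - (1 - th) * mu) / D) by lra.
  apply Rmult_le_reg_r with D; [lra|].
  replace ((M - 2 + (1 - (1 - th) * mu) / D) * D) with ((M - 1 - 1) * D + 1 - (1 - th) * mu)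
    by (field; lra).
  exact Hq.
Qed.

End BuyerGap.

Lemma theta_range rho : rho <= 0 -> 0 <= theta rho < 1.
Proof.
  intros H. unfold theta. split.
  - replace (rho / (rho - 1)) with (- rho / (1 - rho)) by (field; lra).
    apply Rdiv_le_0_compat; lra.
  - apply Rmult_lt_reg_r with (1 - rho); [lra|].
    replace (rho / (rho - 1) * (1 - rho)) with (- rho) by (field; lra). lra.
Qed.

Lemma hasZero_falseP n a y :
  hasZero n a y = false <-> (forall j, (j < n)%nat -> 0 < a j -> 0 < y j).
Proof.
  induction n as [|n IH]; simpl; [split; [intros _ j Hj; lia | reflexivity]|].
  rewrite Bool.orb_false_iff, IH. split.
  - intros [H1 H2] j Hj Ha. destruct (Nat.eq_dec j n) as [->|Hne]; [|apply H1; [lia | exact Ha]].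
    destruct (Rlt_dec 0 (a n)); [|lra]. destruct (Rle_dec (y n) 0); [discriminate | lra].
  - intros H. split; [intros j Hj; apply H; lia|].
    destruct (Rlt_dec 0 (a n)) as [Ha|]; [|reflexivity].
    destruct (Rle_dec (y n) 0); [|reflexivity]. specialize (H n ltac:(lia) Ha). lra.
Qed.

Lemma prodR_pos n F : (forall j, (j < n)%nat -> 0 < F j) -> 0 < prodR n F.
Proof.
  induction n as [|n IH]; simpl; intros H; [lra|].
  apply Rmult_lt_0_compat; [apply IH; intros; apply H; lia | apply H; lia].
Qed.

Lemma ln_prodR n F : (forall j, (j < n)%nat -> 0 < F j) ->
  ln (prodR n F) = sumR n (fun j => ln (F j)).
Proof.
  induction n as [|n IH]; simpl; intros H; [apply ln_1|].
  rewrite ln_mult, IH; [reflexivity | intros; apply H; lia | | apply H; lia].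
  apply prodR_pos. intros; apply H; lia.
Qed.

(* Closed form of CES demand: the buyer spends the fraction [w_j / sum_k w_k] of her
   budget on good [j], where [w_j = a_j^(1/(1-rho)) p_j^theta]. *)
Definition ces_weight (a : nat -> R) (rho : R) (p : nat -> R) (j : nat) : R :=
  if Rlt_dec 0 (a j) then Rpower (a j) (/ (1 - rho)) * Rpower (p j) (theta rho) else 0.

Definition ces_share (n : nat) (a : nat -> R) (rho : R) (p : nat -> R) (j : nat) : R :=
  ces_weight a rho p j / sumR n (ces_weight a rho p).

Definition ces_bundle (n : nat) (a : nat -> R) (rho e : R) (p : nat -> R) (j : nat) : R :=
  e * ces_share n a rho p j / p j.

Lemma ces_weight_nonneg a rho p j : 0 <= ces_weight a rho p j.
Proof.
  unfold ces_weight. destruct (Rlt_dec 0 (a j)); [|lra].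
  left. apply Rmult_lt_0_compat; apply Rpower_pos.
Qed.

Lemma ces_weight_active a rho p j : 0 < a j ->
  ces_weight a rho p j = Rpower (a j) (/ (1 - rho)) * Rpower (p j) (theta rho).
Proof. intros Ha. unfold ces_weight. destruct (Rlt_dec 0 (a j)); [reflexivity | contradiction]. Qed.

Lemma ces_weight_pos a rho p j : 0 < a j -> 0 < ces_weight a rho p j.
Proof. intros Ha. rewrite ces_weight_active by exact Ha. apply Rmult_lt_0_compat; apply Rpower_pos. Qed.

Lemma ces_weight_rescale a rho s q j : 0 < s j -> 0 < q j ->
  ces_weight a rho q j = ces_weight a rho s j * Rpower (q j / s j) (theta rho).
Proof.
  intros Hs Hq. unfold ces_weight. destruct (Rlt_dec 0 (a j)); [|ring].
  rewrite Rmult_assoc, Rpower_mult_distr by (try apply Rdiv_lt_0_compat; lra).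
  do 2 f_equal. field. lra.
Qed.

Lemma ces_weight_cobb_douglas a p j : 0 < a j -> 0 < p j -> ces_weight a 0 p j = a j.
Proof.
  intros Ha Hp. unfold ces_weight, theta. destruct (Rlt_dec 0 (a j)); [|lra].
  replace (/ (1 - 0)) with 1 by field. replace (0 / (0 - 1)) with 0 by field.
  rewrite Rpower_1, Rpower_O by lra. ring.
Qed.

Lemma Rpower_lt_neg_exponent x y k : 0 < x < y -> k < 0 -> Rpower y k < Rpower x k.
Proof.
  intros Hxy Hk. apply exp_increasing.
  apply Rmult_lt_gt_compat_neg_l; [exact Hk | apply ln_increasing; lra].
Qed.

Section CESDemand.

Variables (n : nat) (a : nat -> R) (rho e : R) (p : nat -> R).
Hypothesis rho_nonpos : rho <= 0.
Hypothesis e_pos : 0 < e.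
Hypothesis a_nonneg : forall j, (j < n)%nat -> 0 <= a j.
Hypothesis a_active : exists j, (j < n)%nat /\ 0 < a j.
Hypothesis p_pos : forall j, (j < n)%nat -> 0 < p j.

Local Notation S := (sumR n (ces_weight a rho p)).
Local Notation xh := (ces_bundle n a rho e p).

Lemma ces_weight_sum_pos : 0 < S.
Proof.
  apply sumR_pos; [intros; apply ces_weight_nonneg|].
  destruct a_active as [j [Hj Ha]]. exists j. split; [exact Hj | apply ces_weight_pos, Ha].
Qed.

Lemma ces_share_nonneg j : 0 <= ces_share n a rho p j.
Proof. apply Rdiv_le_0_compat; [apply ces_weight_nonneg | apply ces_weight_sum_pos]. Qed.

Lemma ces_share_sum1 : sumR n (ces_share n a rho p) = 1.
Proof.
  pose proof ces_weight_sum_pos.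
  transitivity (sumR n (fun j => / S * ces_weight a rho p j));
    [apply sumR_ext; intros; unfold ces_share, Rdiv; ring|].
  rewrite sumR_scal. field. lra.
Qed.

Lemma ces_bundle_spend j : (j < n)%nat -> p j * xh j = e * ces_share n a rho p j.
Proof. intros Hj. specialize (p_pos j Hj). unfold ces_bundle. field. lra. Qed.

Lemma ces_bundle_budget : sumR n (fun j => p j * xh j) = e.
Proof.
  rewrite (sumR_ext _ _ (fun j => e * ces_share n a rho p j)) by exact ces_bundle_spend.
  rewrite sumR_scal, ces_share_sum1. ring.
Qed.

Lemma ces_bundle_nonneg j : (j < n)%nat -> 0 <= xh j.
Proof.
  intros Hj. specialize (p_pos j Hj). pose proof (ces_share_nonneg j).
  apply Rdiv_le_0_compat; [apply Rmult_le_pos |]; lra.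
Qed.

Lemma ces_bundle_pos j : (j < n)%nat -> 0 < a j -> 0 < xh j.
Proof.
  intros Hj Ha. specialize (p_pos j Hj). pose proof ces_weight_sum_pos.
  pose proof (ces_weight_pos a rho p j Ha).
  apply Rdiv_lt_0_compat; [apply Rmult_lt_0_compat; [lra | apply Rdiv_lt_0_compat] |]; lra.
Qed.

Lemma ces_bundle_inactive j : ~ 0 < a j -> xh j = 0.
Proof.
  intros Ha. unfold ces_bundle, ces_share, ces_weight.
  destruct (Rlt_dec 0 (a j)); [contradiction|]. unfold Rdiv. ring.
Qed.

Lemma ln_ces_bundle j : (j < n)%nat -> 0 < a j ->
  ln (xh j) = ln (e / S) + (ln (a j) - ln (p j)) / (1 - rho).
Proof.
  intros Hj Ha. specialize (p_pos j Hj). pose proof ces_weight_sum_pos.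
  unfold ces_bundle, ces_share. rewrite ces_weight_active by exact Ha.
  pose proof (Rpower_pos (a j) (/ (1 - rho))). pose proof (Rpower_pos (p j) (theta rho)).
  replace (e * (Rpower (a j) (/ (1 - rho)) * Rpower (p j) (theta rho) / S) / p j)
    with (e / S * (Rpower (a j) (/ (1 - rho)) * Rpower (p j) (theta rho) / p j)) by (field; lra).
  rewrite ln_mult, (ln_div (_ * _) (p j)), ln_mult, !ln_Rpower;
    try apply Rdiv_lt_0_compat; try apply Rmult_lt_0_compat; try lra.
  unfold theta. field. lra.
Qed.

Lemma ces_bundle_marginal j : (j < n)%nat -> 0 < a j ->
  a j * Rpower (xh j) (rho - 1) = Rpower (e / S) (rho - 1) * p j.
Proof.
  intros Hj Ha. specialize (p_pos j Hj) as Hp. unfold Rpower at 1.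
  rewrite ln_ces_bundle by assumption.
  rewrite <- (exp_ln (a j)) at 1 by exact Ha. rewrite <- (exp_ln (p j)) at 2 by exact Hp.
  unfold Rpower. rewrite <- !exp_plus. f_equal. field. lra.
Qed.

Lemma ces_weight_sum_cobb_douglas : rho = 0 -> S = sumR n a.
Proof.
  intros ->. apply sumR_ext. intros j Hj. destruct (Rlt_dec 0 (a j)) as [Ha|Ha].
  - apply ces_weight_cobb_douglas; [exact Ha | apply p_pos, Hj].
  - unfold ces_weight. destruct (Rlt_dec 0 (a j)); [contradiction|]. specialize (a_nonneg j Hj). lra.
Qed.

Lemma cobb_douglas_marginal j : rho = 0 -> (j < n)%nat -> 0 < a j ->
  a j / (sumR n a * xh j) = p j / e.
Proof.
  intros Hrho Hj Ha. pose proof (ces_bundle_marginal j Hj Ha) as Hm.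
  rewrite <- (ces_weight_sum_cobb_douglas Hrho). pose proof ces_weight_sum_pos.
  pose proof (ces_bundle_pos j Hj Ha).
  replace (rho - 1) with (- (1)) in Hm by lra.
  rewrite !Rpower_Ropp, !Rpower_1 in Hm by first [lra | apply Rdiv_lt_0_compat; lra].
  replace (a j / (S * xh j)) with (a j * / xh j / S) by (field; lra).
  rewrite Hm. field. lra.
Qed.

Local Notation dspend y := (fun j => if Rlt_dec 0 (a j) then p j * (y j - xh j) else 0).
Local Notation useless_spend y := (fun j => if Rlt_dec 0 (a j) then 0 else p j * y j).

Lemma useless_spend_nonneg y j : (j < n)%nat -> 0 <= y j -> 0 <= useless_spend y j.
Proof.
  intros Hj Hy. cbv beta. destruct (Rlt_dec 0 (a j)); [lra|].
  apply Rmult_le_pos; [left; apply p_pos, Hj | exact Hy].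
Qed.

Lemma sumR_dspend y :
  sumR n (dspend y) = sumR n (fun j => p j * y j) - e - sumR n (useless_spend y).
Proof.
  transitivity (sumR n (fun j => p j * y j) - sumR n (fun j => p j * xh j) - sumR n (useless_spend y)).
  - rewrite <- !sumR_minus. apply sumR_ext. intros j Hj.
    destruct (Rlt_dec 0 (a j)) as [Ha|Ha]; [ring|]. rewrite (ces_bundle_inactive j Ha). ring.
  - rewrite ces_bundle_budget. reflexivity.
Qed.

(* A feasible deviation cannot increase the spending on the valued goods, and strictly
   decreases it if it buys a good with [a_j = 0]. *)
Lemma sumR_lt_of_budget_supergradient (f g y : nat -> R) c j1 : 0 < c ->
  (forall j, (j < n)%nat -> 0 <= y j) -> sumR n (fun j => p j * y j) <= e ->
  (j1 < n)%nat -> y j1 <> xh j1 ->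
  (forall j, (j < n)%nat -> f j <= g j + c * dspend y j) ->
  (0 < a j1 -> f j1 < g j1 + c * dspend y j1) -> sumR n f < sumR n g.
Proof.
  intros Hc Hy Hb Hj1 Hne Hle Hlt.
  pose proof (sumR_dspend y) as Hsplit.
  assert (sumR n (useless_spend y) >= 0)
    by (apply Rle_ge, sumR_nonneg; intros j Hj; apply useless_spend_nonneg, Hy; exact Hj).
  assert (Hsum : sumR n (fun j => g j + c * dspend y j) = sumR n g + c * sumR n (dspend y))
    by (rewrite sumR_plus, sumR_scal; reflexivity).
  destruct (Rlt_dec 0 (a j1)) as [Ha1|Ha1].
  - assert (sumR n f < sumR n (fun j => g j + c * dspend y j))
      by (apply sumR_lt; [exact Hle | exists j1; split; [exact Hj1 | apply Hlt, Ha1]]).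
    assert (c * sumR n (dspend y) <= 0) by (apply Rmult_le_0_l; lra). lra.
  - assert (0 < sumR n (useless_spend y)).
    { apply sumR_pos; [intros j Hj; apply useless_spend_nonneg, Hy; exact Hj |].
      exists j1. split; [exact Hj1|]. destruct (Rlt_dec 0 (a j1)); [contradiction|].
      rewrite (ces_bundle_inactive j1 Ha1) in Hne. specialize (Hy j1 Hj1).
      apply Rmult_lt_0_compat; [apply p_pos, Hj1 | lra]. }
    assert (sumR n f <= sumR n (fun j => g j + c * dspend y j)) by (apply sumR_le; exact Hle).
    assert (c * sumR n (dspend y) < 0) by nra. lra.
Qed.

Local Notation cd_factor y := (fun j => if Rlt_dec 0 (a j) then Rpower (y j) (a j / sumR n a) else 1).

Lemma cobb_douglas_log_strict y j1 : rho = 0 ->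
  (forall j, (j < n)%nat -> 0 <= y j) -> sumR n (fun j => p j * y j) <= e ->
  (forall j, (j < n)%nat -> 0 < a j -> 0 < y j) -> (j1 < n)%nat -> y j1 <> xh j1 ->
  sumR n (fun j => ln (cd_factor y j)) < sumR n (fun j => ln (cd_factor xh j)).
Proof.
  intros Hrho Hy Hb Hypos Hj1 Hne.
  assert (Htan : forall j, (j < n)%nat -> 0 < a j -> y j <> xh j ->
            ln (cd_factor y j) < ln (cd_factor xh j) + / e * dspend y j).
  { intros j Hj Ha Hnej. simpl. destruct (Rlt_dec 0 (a j)); [|contradiction].
    rewrite !ln_Rpower.
    pose proof (ces_bundle_pos j Hj Ha). pose proof (Hypos j Hj Ha).
    pose proof (cobb_douglas_marginal j Hrho Hj Ha) as Hm.
    assert (HA : 0 < sumR n a) by (rewrite <- ces_weight_sum_cobb_douglas by exact Hrho;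
                                    apply ces_weight_sum_pos).
    replace (/ e * (p j * (y j - xh j))) with (a j / sumR n a * ((y j - xh j) / xh j))
      by (replace (p j) with (p j / e * e) by (field; lra); rewrite <- Hm; field; lra).
    pose proof (ln_lt_tangent (xh j) (y j) ltac:(lra) ltac:(lra) Hnej).
    assert (0 < a j / sumR n a) by (apply Rdiv_lt_0_compat; lra). nra. }
  apply (sumR_lt_of_budget_supergradient _ _ y (/ e) j1); try assumption.
  - apply Rinv_0_lt_compat, e_pos.
  - intros j Hj. destruct (Req_dec (y j) (xh j)) as [E|E].
    + simpl. rewrite E. destruct (Rlt_dec 0 (a j)); lra.
    + destruct (Rlt_le_dec 0 (a j)) as [Ha|Ha]; [left; apply Htan; assumption|].
      simpl. destruct (Rlt_dec 0 (a j)); lra.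
  - intros Ha. apply Htan; assumption.
Qed.

Local Notation ces_sum y := (sumR n (fun j => if Rlt_dec 0 (a j) then a j * Rpower (y j) rho else 0)).

Lemma ces_sum_strict y j1 : rho < 0 ->
  (forall j, (j < n)%nat -> 0 <= y j) -> sumR n (fun j => p j * y j) <= e ->
  (forall j, (j < n)%nat -> 0 < a j -> 0 < y j) -> (j1 < n)%nat -> y j1 <> xh j1 ->
  ces_sum xh < ces_sum y.
Proof.
  intros Hrho Hy Hb Hypos Hj1 Hne.
  set (lam := Rpower (e / S) (rho - 1)).
  assert (Hlam : 0 < lam) by apply Rpower_pos.
  assert (Htan : forall j, (j < n)%nat -> 0 < a j -> y j <> xh j ->
            a j * Rpower (xh j) rho + rho * lam * (p j * (y j - xh j)) < a j * Rpower (y j) rho).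
  { intros j Hj Ha Hnej.
    pose proof (Rpower_gt_tangent rho (xh j) (y j) Hrho (ces_bundle_pos j Hj Ha) (Hypos j Hj Ha) Hnej).
    replace (rho * lam * (p j * (y j - xh j))) with (rho * (a j * Rpower (xh j) (rho - 1)) * (y j - xh j))
      by (unfold lam; rewrite ces_bundle_marginal by assumption; ring).
    nra. }
  enough (Hopp : sumR n (fun j => - (if Rlt_dec 0 (a j) then a j * Rpower (y j) rho else 0)) <
                 sumR n (fun j => - (if Rlt_dec 0 (a j) then a j * Rpower (xh j) rho else 0)))
    by (rewrite !sumR_opp in Hopp; lra).
  apply (sumR_lt_of_budget_supergradient _ _ y (- rho * lam) j1); try assumption.
  - nra.
  - intros j Hj. destruct (Rlt_dec 0 (a j)) as [Ha|Ha]; [|lra].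
    destruct (Req_dec (y j) (xh j)) as [E|E]; [rewrite E; lra|].
    specialize (Htan j Hj Ha E). lra.
  - intros Ha. destruct (Rlt_dec 0 (a j1)); [|contradiction]. specialize (Htan j1 Hj1 Ha Hne). lra.
Qed.

Lemma ces_utility_bundle_pos : 0 < ces_utility n a rho xh.
Proof.
  unfold ces_utility.
  replace (hasZero n a xh) with false
    by (symmetry; apply hasZero_falseP; intros; apply ces_bundle_pos; assumption).
  destruct (Req_EM_T rho 0); [|apply Rpower_pos].
  apply prodR_pos. intros j Hj. destruct (Rlt_dec 0 (a j)); [apply Rpower_pos | lra].
Qed.

Lemma ces_bundle_unique y :
  (forall j, (j < n)%nat -> 0 <= y j) -> sumR n (fun j => p j * y j) <= e ->
  ces_utility n a rho xh <= ces_utility n a rho y -> forall j, (j < n)%nat -> y j = xh j.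
Proof.
  intros Hy Hb Hu j1 Hj1. destruct (Req_dec (y j1) (xh j1)) as [|Hne]; [assumption | exfalso].
  pose proof ces_utility_bundle_pos as Hpos.
  unfold ces_utility in Hu, Hpos.
  replace (hasZero n a xh) with false in Hu, Hpos
    by (symmetry; apply hasZero_falseP; intros; apply ces_bundle_pos; assumption).
  destruct (hasZero n a y) eqn:Hz; [lra|].
  rewrite hasZero_falseP in Hz.
  assert (Hfactor : forall z, (forall j, (j < n)%nat -> 0 < a j -> 0 < z j) ->
            forall j, (j < n)%nat -> 0 < (if Rlt_dec 0 (a j) then Rpower (z j) (a j / sumR n a) else 1))
    by (intros z _ j _; destruct (Rlt_dec 0 (a j)); [apply Rpower_pos | lra]).
  destruct (Req_EM_T rho 0) as [H0|H0].
  - pose proof (cobb_douglas_log_strict y j1 H0 Hy Hb Hz Hj1 Hne) as Hlt.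
    rewrite <- !ln_prodR in Hlt
      by (apply Hfactor; first [exact Hz | intros; apply ces_bundle_pos; assumption]).
    pose proof (ln_le _ _ Hpos Hu). lra.
  - destruct a_active as [j0 [Hj0 Ha0]].
    assert (Hsum_pos : forall z, (forall j, (j < n)%nat -> 0 < a j -> 0 < z j) ->
              0 < sumR n (fun j => if Rlt_dec 0 (a j) then a j * Rpower (z j) rho else 0)).
    { intros z Hzpos. apply sumR_pos.
      - intros j Hj. destruct (Rlt_dec 0 (a j)); [|lra]. pose proof (Rpower_pos (z j) rho). nra.
      - exists j0. split; [exact Hj0|]. destruct (Rlt_dec 0 (a j0)); [|contradiction].
        apply Rmult_lt_0_compat; [exact Ha0 | apply Rpower_pos]. }
    pose proof (ces_sum_strict y j1 ltac:(lra) Hy Hb Hz Hj1 Hne) as Hlt.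
    pose proof (Rpower_lt_neg_exponent _ _ (/ rho)
      (conj (Hsum_pos xh ltac:(intros; apply ces_bundle_pos; assumption)) Hlt)
      ltac:(apply Rinv_lt_0_compat; lra)).
    lra.
Qed.

Lemma optimal_bundle_eq_ces_bundle x :
  optimal_bundle n a rho e p x -> forall j, (j < n)%nat -> x j = xh j.
Proof.
  intros [Hx0 [Hxb Hopt]]. apply ces_bundle_unique; [exact Hx0 | exact Hxb|].
  apply Hopt; [exact ces_bundle_nonneg | rewrite ces_bundle_budget; lra].
Qed.

End CESDemand.

Lemma demand_spending n m a rho e p x :
  (forall i, (i < m)%nat -> rho i <= 0) -> (forall i, (i < m)%nat -> 0 < e i) ->
  (forall i j, (i < m)%nat -> (j < n)%nat -> 0 <= a i j) ->
  (forall i, (i < m)%nat -> exists j, (j < n)%nat /\ 0 < a i j) ->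
  (forall j, (j < n)%nat -> 0 < p j) -> is_demand n m a rho e p x ->
  forall i j, (i < m)%nat -> (j < n)%nat -> p j * x i j = e i * ces_share n (a i) (rho i) p j.
Proof.
  intros Hrho He Ha Hact Hp Hdem i j Hi Hj.
  rewrite (optimal_bundle_eq_ces_bundle n (a i) (rho i) (e i) p (Hrho i Hi) (He i Hi)
             (fun j Hj => Ha i j Hi Hj) (Hact i Hi) Hp (x i) (Hdem i Hi) j Hj).
  apply ces_bundle_spend; auto.
Qed.

Lemma ces_share_rescale n a rho s q j : (exists k, (k < n)%nat /\ 0 < a k) ->
  (forall k, (k < n)%nat -> 0 < s k) -> (forall k, (k < n)%nat -> 0 < q k) -> (j < n)%nat ->
  ces_share n a rho q j = ces_share n a rho s j * Rpower (q j / s j) (theta rho) /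
    sumR n (fun k => ces_share n a rho s k * Rpower (q k / s k) (theta rho)).
Proof.
  intros Hact Hs Hq Hj.
  pose proof (ces_weight_sum_pos n a rho s Hact) as HSs.
  pose proof (ces_weight_sum_pos n a rho q Hact) as HSq.
  assert (E : sumR n (fun k => ces_share n a rho s k * Rpower (q k / s k) (theta rho)) =
              sumR n (ces_weight a rho q) / sumR n (ces_weight a rho s)).
  { transitivity (/ sumR n (ces_weight a rho s) * sumR n (ces_weight a rho q)); [|field; lra].
    rewrite <- sumR_scal. apply sumR_ext. intros k Hk.
    rewrite (ces_weight_rescale a rho s q k (Hs k Hk) (Hq k Hk)). unfold ces_share. field. lra. }
  rewrite E. unfold ces_share at 1.
  rewrite (ces_weight_rescale a rho s q j (Hs j Hj) (Hq j Hj)). unfold ces_share. field. lra.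
Qed.

Lemma ces_buyer_gap n a rho s q : rho <= 0 -> (exists k, (k < n)%nat /\ 0 < a k) ->
  (forall j, (j < n)%nat -> 0 < s j) -> (forall j, (j < n)%nat -> 0 < q j) ->
  (forall j, (j < n)%nat -> / 2 < q j / s j <= 2) ->
  gap_coef * (1 - theta rho) * sumR n (fun j => ces_share n a rho s j * ((q j / s j - 1) ^ 2 / (q j / s j)))
  <= sumR n (fun j => ces_share n a rho s j * (q j / s j)) - 2
     + sumR n (fun j => ces_share n a rho q j / (q j / s j)).
Proof.
  intros Hrho Hact Hs Hq Hr.
  set (U := ces_share n a rho s). set (r := fun j => q j / s j).
  set (P := sumR n (fun k => U k * Rpower (r k) (theta rho))).
  assert (HP : 0 < P).
  { destruct Hact as [j0 [Hj0 Ha0]]. apply sumR_pos.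
    - intros k Hk. apply Rmult_le_pos; [apply ces_share_nonneg; exists j0; auto | left; apply Rpower_pos].
    - exists j0. split; [exact Hj0|]. apply Rmult_lt_0_compat; [|apply Rpower_pos].
      apply Rdiv_lt_0_compat; [apply ces_weight_pos, Ha0 | apply ces_weight_sum_pos; exists j0; auto]. }
  replace (sumR n (fun j => ces_share n a rho q j / (q j / s j)))
    with (sumR n (fun j => U j * Rpower (r j) (theta rho) / r j) / P).
  - apply buyer_gap; [apply theta_range, Hrho | intros; apply ces_share_nonneg, Hact
                     | apply ces_share_sum1, Hact | exact Hr].
  - transitivity (/ P * sumR n (fun j => U j * Rpower (r j) (theta rho) / r j)); [apply Rmult_comm|].
    rewrite <- sumR_scal. apply sumR_ext. intros j Hj.
    rewrite (ces_share_rescale n a rho s q j Hact Hs Hq Hj). fold U.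
    change (sumR n (fun k => U k * Rpower (q k / s k) (theta rho))) with P. unfold r.
    specialize (Hs j Hj). specialize (Hq j Hj). field. repeat split; lra.
Qed.

(* Writing [r_j = pq_j / ps_j], both sides equal [sum_j (pq_j - ps_j) - sum_ij x_ij (pq_j - ps_j)]:
   the first sum is split along the budgets spent at [ps], the second along those spent at [pq]. *)
Lemma excess_price_identity n m (e : nat -> R) (U V x : nat -> nat -> R) (ps pq : nat -> R) :
  (forall j, (j < n)%nat -> 0 < ps j) -> (forall j, (j < n)%nat -> 0 < pq j) ->
  (forall j, (j < n)%nat -> ps j = sumR m (fun i => e i * U i j)) ->
  (forall i j, (i < m)%nat -> (j < n)%nat -> pq j * x i j = e i * V i j) ->
  (forall i, (i < m)%nat -> sumR n (U i) = 1) -> (forall i, (i < m)%nat -> sumR n (V i) = 1) ->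
  sumR n (fun j => - excess m x j * (pq j - ps j)) =
  sumR m (fun i => e i * (sumR n (fun j => U i j * (pq j / ps j)) - 2
                          + sumR n (fun j => V i j / (pq j / ps j)))).
Proof.
  intros Hps Hpq Hclear Hspend HU HV.
  transitivity (sumR n (fun j => sumR m (fun i =>
                  e i * (U i j * (pq j / ps j - 1) - V i j * (1 - ps j / pq j))))).
  - apply sumR_ext. intros j Hj. specialize (Hps j Hj). specialize (Hpq j Hj).
    unfold excess.
    replace (- (sumR m (fun i => x i j) - 1) * (pq j - ps j))
      with (ps j * (pq j / ps j - 1) - sumR m (fun i => (pq j - ps j) * x i j))
      by (rewrite sumR_scal; field; lra).
    rewrite (Hclear j Hj) at 1. rewrite Rmult_comm, <- sumR_scal, <- sumR_minus.
    apply sumR_ext. intros i Hi.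
    replace ((pq j - ps j) * x i j) with (pq j * x i j * (1 - ps j / pq j)) by (field; lra).
    rewrite (Hspend i j Hi Hj). ring.
  - rewrite sumR_swap. apply sumR_ext. intros i Hi. rewrite sumR_scal. f_equal.
    transitivity (sumR n (fun j => U i j * (pq j / ps j)) - sumR n (U i) - sumR n (V i)
                  + sumR n (fun j => V i j / (pq j / ps j))).
    + rewrite <- !sumR_minus, <- sumR_plus. apply sumR_ext. intros j Hj.
      specialize (Hps j Hj). specialize (Hpq j Hj). field. lra.
    + rewrite (HU i Hi), (HV i Hi). ring.
Qed.

Lemma market_price_gap n m a rho e pstar thbar p' x' :
  (forall i, (i < m)%nat -> rho i <= 0) -> (forall i, (i < m)%nat -> 0 < e i) ->
  (forall i j, (i < m)%nat -> (j < n)%nat -> 0 <= a i j) ->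
  (forall i, (i < m)%nat -> exists j, (j < n)%nat /\ 0 < a i j) ->
  market_equilibrium n m a rho e pstar -> (forall j, (j < n)%nat -> 0 < pstar j) ->
  (forall i, (i < m)%nat -> theta (rho i) <= thbar) ->
  (forall j, (j < n)%nat -> / 2 < p' j / pstar j <= 2) -> is_demand n m a rho e p' x' ->
  gap_coef * (1 - thbar) * sumR n (fun j => pstar j * ((p' j / pstar j - 1) ^ 2 / (p' j / pstar j)))
  <= sumR n (fun j => - excess m x' j * (p' j - pstar j)).
Proof.
  intros Hrho He Ha Hact [xs [Hdems [Hclear _]]] Hps Hth Hr Hdem.
  assert (Hq : forall j, (j < n)%nat -> 0 < p' j).
  { intros j Hj. specialize (Hr j Hj). specialize (Hps j Hj).
    replace (p' j) with (p' j / pstar j * pstar j) by (field; lra). nra. }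
  set (U := fun i => ces_share n (a i) (rho i) pstar).
  assert (Hdecomp : forall j, (j < n)%nat -> pstar j = sumR m (fun i => e i * U i j)).
  { intros j Hj. specialize (Hclear j Hj (Hps j Hj)). unfold excess in Hclear.
    rewrite <- (Rmult_1_r (pstar j)).
    replace 1 with (sumR m (fun i => xs i j)) by lra.
    rewrite <- sumR_scal. apply sumR_ext. intros i Hi.
    apply (demand_spending n m a rho e pstar xs); auto. }
  rewrite (excess_price_identity n m e U (fun i => ces_share n (a i) (rho i) p') x' pstar p'
             Hps Hq Hdecomp (demand_spending n m a rho e p' x' Hrho He Ha Hact Hq Hdem)
             (fun i Hi => ces_share_sum1 _ _ _ _ (Hact i Hi))
             (fun i Hi => ces_share_sum1 _ _ _ _ (Hact i Hi))).
  rewrite (sumR_mixture n m e U pstar _ Hdecomp), <- sumR_scal.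
  apply sumR_le. intros i Hi.
  pose proof (ces_buyer_gap n (a i) (rho i) pstar p' (Hrho i Hi) (Hact i Hi) Hps Hq Hr) as Hbuyer.
  fold (U i) in Hbuyer.
  set (W := sumR n (fun j => U i j * ((p' j / pstar j - 1) ^ 2 / (p' j / pstar j)))) in *.
  assert (HW : 0 <= W).
  { apply sumR_nonneg. intros j Hj. specialize (Hr j Hj).
    apply Rmult_le_pos; [apply ces_share_nonneg, Hact, Hi|].
    apply Rdiv_le_0_compat; [apply pow2_ge_0 | lra]. }
  assert (gap_coef * (1 - thbar) * W <= gap_coef * (1 - theta (rho i)) * W)
    by (apply Rmult_le_compat_r; [exact HW | unfold gap_coef; specialize (Hth i Hi); lra]).
  specialize (He i Hi).
  replace (gap_coef * (1 - thbar) * (e i * W)) with (e i * (gap_coef * (1 - thbar) * W)) by ring.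
  apply Rmult_le_compat_l; lra.
Qed.

(* For [th <= 3/5] the entry 26.56 suffices; for [th > 3/5] one uses
   [1 + th - 2^th <= (1 - th) (2 ln 2 - 1) <= 2/5 (1 - th)]. *)
Lemma Mbar_gap_coef th : 0 <= th < 1 -> 1 <= Mbar th * (gap_coef * (1 - th)) ^ 2.
Proof.
  intros Hth. unfold Mbar, gap_coef.
  set (X := if Req_EM_T th 0 then 664 / 100 / (1 - ln 2) else 664 / 100 * th / (1 + th - Rpower 2 th)).
  replace (/ (1 - th) * Rmax (2656 / 100) X * (13 / 40 * (1 - th)) ^ 2)
    with ((13 / 40) ^ 2 * ((1 - th) * Rmax (2656 / 100) X)) by (field; lra).
  enough (947 / 100 <= (1 - th) * Rmax (2656 / 100) X) by lra.
  destruct (Rle_dec th (3 / 5)).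
  - pose proof (Rmax_l (2656 / 100) X).
    assert ((1 - th) * (2656 / 100) <= (1 - th) * Rmax (2656 / 100) X) by (apply Rmult_le_compat_l; lra).
    lra.
  - pose proof (Rmax_r (2656 / 100) X).
    assert (HX : X = 664 / 100 * th / (1 + th - Rpower 2 th))
      by (unfold X; destruct (Req_EM_T th 0); [lra | reflexivity]).
    assert (Hk : 0 < 1 + th - Rpower 2 th)
      by (pose proof (Rpower_lt_bernoulli 2 th ltac:(lra) ltac:(lra) ltac:(lra)); lra).
    assert (Hk2 : 1 + th - Rpower 2 th <= (1 - th) * (2 / 5)).
    { unfold Rpower. replace (th * ln 2) with (ln 2 + - ((1 - th) * ln 2)) by ring.
      rewrite exp_plus, exp_ln by lra.
      pose proof (exp_ineq1_le (- ((1 - th) * ln 2))). pose proof ln_2_lt.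
      assert ((1 - th) * (2 * ln 2 - 1) <= (1 - th) * (2 / 5)) by (apply Rmult_le_compat_l; lra).
      lra. }
    assert (Hq : 5 / 2 <= (1 - th) / (1 + th - Rpower 2 th)).
    { apply Rmult_le_reg_r with (1 + th - Rpower 2 th); [lra|].
      replace ((1 - th) / (1 + th - Rpower 2 th) * (1 + th - Rpower 2 th)) with (1 - th)
        by (field; lra).
      lra. }
    assert (664 / 100 * th * (5 / 2) <= (1 - th) * X).
    { rewrite HX. replace ((1 - th) * (664 / 100 * th / (1 + th - Rpower 2 th)))
        with (664 / 100 * th * ((1 - th) / (1 + th - Rpower 2 th))) by (field; lra).
      apply Rmult_le_compat_l; lra. }
    assert ((1 - th) * X <= (1 - th) * Rmax (2656 / 100) X) by (apply Rmult_le_compat_l; lra).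
    lra.
Qed.

Lemma ratio_bounds_of_box ps pq : 0 < ps -> ps / (19 / 10) <= pq <= 19 / 10 * ps ->
  / 2 < pq / ps <= 2.
Proof.
  intros Hps Hbox. split.
  - apply Rmult_lt_reg_r with ps; [lra|]. unfold Rdiv in *. rewrite Rmult_assoc, Rinv_l by lra. lra.
  - apply Rmult_le_reg_r with ps; [lra|]. unfold Rdiv. rewrite Rmult_assoc, Rinv_l by lra. lra.
Qed.

Lemma price_gap_cauchy_schwarz n (z ps pq : nat -> R) :
  (forall j, (j < n)%nat -> 0 < ps j) -> (forall j, (j < n)%nat -> 0 < pq j) ->
  sumR n (fun j => - z j * (pq j - ps j)) ^ 2 <=
  sumR n (fun j => pq j * z j ^ 2) * sumR n (fun j => ps j * ((pq j / ps j - 1) ^ 2 / (pq j / ps j))).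
Proof.
  intros Hps Hpq.
  rewrite (sumR_ext n (fun j => pq j * z j ^ 2) (fun j => pq j * (- z j) ^ 2)) by (intros; ring).
  rewrite (sumR_ext n (fun j => ps j * _) (fun j => (pq j - ps j) ^ 2 / pq j))
    by (intros j Hj; specialize (Hps j Hj); specialize (Hpq j Hj); field; lra).
  apply sumR_cauchy_schwarz. exact Hpq.
Qed.

Lemma sq_bound_of_gap c B Y Z : 0 < c -> 0 <= B -> 0 <= Z -> c * B <= Y -> Y ^ 2 <= Z * B ->
  c ^ 2 * B <= Z.
Proof.
  intros Hc HB HZ HcB HY. destruct (Req_dec B 0) as [->|HB0]; [lra|].
  assert ((c * B) ^ 2 <= Y ^ 2) by (assert (0 <= c * B) by nra; nra).
  apply Rmult_le_reg_r with B; [lra|]. nra.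
Qed.

Theorem mainTheorem9
  (n m : nat) (a : nat -> nat -> R) (rho e : nat -> R)
  (pstar : nat -> R) (thbar : R) (p' : nat -> R) (x' : nat -> nat -> R) :
  (forall i, (i < m)%nat -> rho i <= 0) ->
  (forall i, (i < m)%nat -> 0 < e i) ->
  (forall i j, (i < m)%nat -> (j < n)%nat -> 0 <= a i j) ->
  (forall i, (i < m)%nat -> exists j, (j < n)%nat /\ 0 < a i j) ->
  market_equilibrium n m a rho e pstar ->
  (forall j, (j < n)%nat -> 0 < pstar j) ->
  (forall i, (i < m)%nat -> theta (rho i) <= thbar) ->
  (exists i, (i < m)%nat /\ theta (rho i) = thbar) ->
  (forall j, (j < n)%nat -> pstar j / (19 / 10) <= p' j <= (19 / 10) * pstar j) ->
  is_demand n m a rho e p' x' ->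
  sumR n (fun j => pstar j * (ln (p' j / pstar j)) ^ 2)
    <= Mbar thbar * sumR n (fun j => p' j * (excess m x' j) ^ 2).
Proof.
  intros Hrho He Ha Hact Heq Hps Hth [i0 [Hi0 Hth0]] Hbox Hdem.
  assert (Hthb : 0 <= thbar < 1) by (rewrite <- Hth0; apply theta_range, Hrho, Hi0).
  assert (Hr : forall j, (j < n)%nat -> / 2 < p' j / pstar j <= 2)
    by (intros j Hj; apply ratio_bounds_of_box; auto).
  assert (Hq : forall j, (j < n)%nat -> 0 < p' j)
    by (intros j Hj; specialize (Hbox j Hj); specialize (Hps j Hj);
        assert (0 < pstar j / (19 / 10)) by lra; lra).
  set (B := sumR n (fun j => pstar j * ((p' j / pstar j - 1) ^ 2 / (p' j / pstar j)))).
  set (Z := sumR n (fun j => p' j * excess m x' j ^ 2)).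
  pose proof (market_price_gap n m a rho e pstar thbar p' x' Hrho He Ha Hact Heq Hps Hth Hr Hdem) as Hgap.
  pose proof (price_gap_cauchy_schwarz n (excess m x') pstar p' Hps Hq) as Hcs.
  assert (HL : sumR n (fun j => pstar j * ln (p' j / pstar j) ^ 2) <= B).
  { apply sumR_le. intros j Hj. specialize (Hr j Hj).
    apply Rmult_le_compat_l; [left; apply Hps, Hj | apply ln_sq_le; lra]. }
  assert (HB : 0 <= B) by (apply Rle_trans with (2 := HL), sumR_nonneg; intros j Hj;
                            apply Rmult_le_pos; [left; apply Hps, Hj | apply pow2_ge_0]).
  assert (HZ : 0 <= Z) by (apply sumR_nonneg; intros j Hj;
                            apply Rmult_le_pos; [left; apply Hq, Hj | apply pow2_ge_0]).
  pose proof (Mbar_gap_coef thbar Hthb) as HM.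
  pose proof (sq_bound_of_gap (gap_coef * (1 - thbar)) B _ Z
                ltac:(unfold gap_coef; nra) HB HZ Hgap Hcs) as Hsq.
  set (c2 := (gap_coef * (1 - thbar)) ^ 2) in *.
  assert (HM0 : 0 < Mbar thbar) by (assert (0 < c2) by (unfold c2, gap_coef; nra); nra).
  assert (Mbar thbar * (c2 * B) <= Mbar thbar * Z) by (apply Rmult_le_compat_l; lra).
  nra.
Qed.
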